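(* In the model and protocol $\mathrm{OciorABA}^*$ described in the context, with $n\ge 3t+1$, if all honest nodes input the same message $w$, then at least $t+1$ of the instances $\mathrm{ABBA}_1,\dots,\mathrm{ABBA}_n$ eventually output $1$.
   Context: Model: there are $n$ nodes $\mathrm{Node}_1,\dots,\mathrm{Node}_n$ in an asynchronous network (every message sent between honest nodes is eventually delivered, with arbitrary adversarial delay). An adaptive adversary may corrupt (make dishonest/Byzantine) at most $t$ nodes in total; $\mathcal F\subseteq[1:n]$ denotes the set of dishonest nodes; $n\ge 3t+1$. Primitives used as black boxes: (RBC) For each $j\in[1:n]$ there is a reliable broadcast instance $\mathrm{RBC}_j$ with leader $\mathrm{Node}_j$, satisfying: Consistency (if two honest nodes output $w',w''$ then $w'=w''$); Validity (if the leader is honest and inputs $w$, every honest node eventually outputs $w$); Totality (if one honest node outputs a value, every honest node eventually outputs a value). (ABBA) For each $j\in[1:n]$ there is a binary Byzantine agreement instance $\mathrm{ABBA}_j$ (inputs and outputs in $\{0,1\}$), satisfying: Termination (if all honest nodes provide inputs, every honest node eventually outputs a value and terminates); Consistency (if an honest node outputs $b$, every honest node eventually outputs $b$); Validity (if all honest nodes input the same $b$, every honest node eventually outputs $b$). (Erasure code) An $(n,t+1)$ erasure code over an alphabet $\Sigma$: an encoder $\mathrm{Enc}$ mapping a message $w$ to $(\mathrm{Enc}_1(w),\dots,\mathrm{Enc}_n(w))\in\Sigma^n$ and a decoder $\mathrm{Dec}$ such that for every set $K\subseteq[1:n]$ with $|K|=t+1$, $\mathrm{Dec}(\{\mathrm{Enc}_j(w)\}_{j\in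 K})=w$. Protocol $\mathrm{OciorABA}^*$, code for an honest $\mathrm{Node}_i$ with input message $w_i$: (1) Compute $(y^{(i)}_1,\dots,y^{(i)}_n)=\mathrm{Enc}(w_i)$ and input $y^{(i)}_i$ into $\mathrm{RBC}_i$ (as leader). (2) Upon delivery of a value $y^{(j)}_j$ from $\mathrm{RBC}_j$ (after step (1) has been executed), if $\mathrm{Node}_i$ has not yet given an input to $\mathrm{ABBA}_j$: set $a_i[j]=1$ if $y^{(j)}_j=y^{(i)}_j$ and $a_i[j]=0$ otherwise, and input $a_i[j]$ into $\mathrm{ABBA}_j$. (3) Upon obtaining outputs from $n-t$ of the instances $\mathrm{ABBA}_1,\dots,\mathrm{ABBA}_n$, input $0$ into every $\mathrm{ABBA}_j$ to which $\mathrm{Node}_i$ has not yet given an input. (4) Upon obtaining outputs from all $n$ ABBA instances: let $S=\{j:\mathrm{ABBA}_j\text{ output }1\}$. If $|S|<t+1$, output a default value $\bot$ and terminate. Otherwise let $K$ be the set of the $t+1$ smallest elements of $S$, wait for delivery of $y^{(j)}_j$ from $\mathrm{RBC}_j$ for all $j\in K$, output $\mathrm{Dec}(\{y^{(j)}_j\}_{j\in K})$ and terminate. *)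

From mathcomp Require Import all_boot all_order.
Set Implicit Arguments. Unset Strict Implicit. Unset Printing Implicit Defensive.

(* An event record: [Some (s, v)] = the event happened at (discrete) time [s]
   with value [v]; [None] = it never happens. *)

(* Binary histories for the family ABBA_1..ABBA_n:
   [h j i] = input (resp. output) of node i in instance ABBA_j. *)
Definition hist (n : nat) := 'I_n -> 'I_n -> option (nat * bool).

Definition trunc_lt (T : nat) (o : option (nat * bool)) : option (nat * bool) :=
  if o is Some (s, b) then (if s < T then o else None) else None.
Definition trunc_le (T : nat) (o : option (nat * bool)) : option (nat * bool) :=
  if o is Some (s, b) then (if s <= T then o else None) else None.

(* The black-box ABBA instances, as a (causal) map from the honest nodes'
   input histories to the honest nodes' output histories; the adversary's
   strategy inside the ABBAs is baked into the map.  The properties hold for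
   every input history the environment may provide (black-box security). *)
Definition ABBA_family (n : nat) (F : {set 'I_n}) (A : hist n -> hist n) : Prop :=
  [/\ (forall (T : nat) (x x' : hist n),
         (forall j i, i \notin F -> trunc_lt T (x j i) = trunc_lt T (x' j i)) ->
         forall j i, i \notin F -> trunc_le T (A x j i) = trunc_le T (A x' j i)),
      (forall (x : hist n) j,
         (forall i, i \notin F -> x j i <> None) ->
         forall i, i \notin F -> A x j i <> None),
      (forall (x : hist n) j i k s b,
         i \notin F -> k \notin F -> A x j i = Some (s, b) ->
         exists s', A x j k = Some (s', b)) &
      (forall (x : hist n) j b,
         (forall i, i \notin F -> exists s, x j i = Some (s, b)) ->
         forall i, i \notin F -> exists s, A x j i = Some (s, b))].

(* The RBC instances: [D j i] = delivery (time, value) of RBC_j at node i;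
   [lead j] = the input of leader j (relevant when j is honest). *)
Definition RBC_family (n : nat) (F : {set 'I_n}) (Sigma : Type)
    (lead : 'I_n -> Sigma) (D : 'I_n -> 'I_n -> option (nat * Sigma)) : Prop :=
  [/\
      (forall j i k s s' v v', i \notin F -> k \notin F ->
         D j i = Some (s, v) -> D j k = Some (s', v') -> v = v'),
      (forall j, j \notin F -> forall i, i \notin F ->
         exists s, D j i = Some (s, lead j)) &
      (forall j i, i \notin F -> D j i <> None ->
         forall k, k \notin F -> D j k <> None)].

Definition erasure_code (n t : nat) (M Sigma : Type)
    (Enc : M -> 'I_n -> Sigma) (Dec : ('I_n -> option Sigma) -> M) : Prop :=
  forall (w : M) (K : {set 'I_n}), #|K| = t.+1 ->
    Dec (fun j => if j \in K then Some (Enc w j) else None) = w.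

Definition out_by (T : nat) (o : option (nat * bool)) : bool :=
  if o is Some (s, _) then s <= T else false.
Definition triggered (n t : nat) (out : hist n) (i : 'I_n) (T : nat) : bool :=
  n - t <= #|[set j : 'I_n | out_by T (out j i)]|.

(* Steps (2) and (3) of OciorABA*, for every honest node i and instance j:
   [inp j i] is the input node i gives to ABBA_j.  Step (1) happens at time 0;
   step (2) fires at the delivery time of RBC_j unless step (3) has already
   fired strictly earlier; step (3) fires at the first time node i has
   obtained n - t ABBA outputs (ties broken arbitrarily). *)
Definition protocol_run (n t : nat) (F : {set 'I_n}) (M : Type) (Sigma : eqType)
    (Enc : M -> 'I_n -> Sigma) (winp : 'I_n -> M)
    (D : 'I_n -> 'I_n -> option (nat * Sigma)) (out inp : hist n) : Prop :=
  forall j i, i \notin F ->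
    match inp j i with
    | Some (s, b) =>
        (exists y, [/\ D j i = Some (s, y), b = (y == Enc (winp i) j)
                     & forall T, T < s -> ~~ triggered t out i T])
        \/
        ([/\ b = false, triggered t out i s,
             forall T, T < s -> ~~ triggered t out i T
           & forall s' y, D j i = Some (s', y) -> s <= s'])
    | None => D j i = None /\ forall T, ~~ triggered t out i T
    end.

Definition outputs_one (o : option (nat * bool)) : bool :=
  if o is Some (_, b) then b else false.

From mathcomp Require Import all_boot all_order.
From Stdlib Require Import Classical.
From mathcomp Require Import zify.

(* If no honest node has fired step (3) before time T, every input an honest
   node gives to the ABBA of an honest leader before T comes from step (2),
   and is 1 since all honest nodes hold the same message. Let T0 be the first
   time some honest node i0 fires step (3): i0 then holds n - t outputs, at
   least n - 2t >= t + 1 of them from ABBAs of honest leaders, and each of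
   these outputs depends only on honest inputs strictly before T0, all equal
   to 1; so by validity (applied to the history padded with 1's from T0 on)
   and causality it is 1, hence 1 at every honest node by consistency. If no
   honest node ever fires step (3), every ABBA of an honest leader receives
   only 1's, and there are n - t >= t + 1 of them. *)

Definition unanimous_one {n : nat} (F : {set 'I_n}) (out : hist n) (j : 'I_n) : bool :=
  [forall i : 'I_n, (i \notin F) ==> outputs_one (out j i)].

Lemma honest_leaders_card {n t : nat} {F : {set 'I_n}} (S : {set 'I_n}) :
  3 * t + 1 <= n -> #|F| <= t -> n - t <= #|S| -> t.+1 <= #|S :\: F|.
Proof.
move=> Hnt HF HS; rewrite cardsD.
have := subset_leq_card (subsetIr S F); lia.
Qed.

Definition pad_after (T : nat) (o : option (nat * bool)) : option (nat * bool) :=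
  if trunc_lt T o is Some _ then o else Some (T, true).

Lemma trunc_lt_pad_after T o : trunc_lt T (pad_after T o) = trunc_lt T o.
Proof.
rewrite /pad_after; case: o => [[s b]|] /=; last by rewrite ltnn.
by case: ifP => hs /=; rewrite ?hs ?ltnn.
Qed.

Section ABBAFamily.

Context {n : nat} {F : {set 'I_n}} {A : hist n -> hist n} (HA : ABBA_family F A).

Lemma unanimous_one_of_output x j i s :
  i \notin F -> A x j i = Some (s, true) -> unanimous_one F (A x) j.
Proof.
case: HA => _ _ Hcons _ hi hout; apply/forallP => k; apply/implyP => hk.
by have [s' ->] := Hcons x j i k s true hi hk hout.
Qed.

Lemma unanimous_one_of_inputs x j :
  (forall i, i \notin F -> exists s, x j i = Some (s, true)) ->
  unanimous_one F (A x) j.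
Proof.
case: HA => _ _ _ Hval hin; apply/forallP => i; apply/implyP => hi.
by have [s ->] := Hval x j true hin i hi.
Qed.

Lemma unanimous_one_of_early_output {T} {x : hist n} {j i} :
  (forall k s (b : bool), k \notin F -> x j k = Some (s, b) -> s < T -> b) ->
  i \notin F -> out_by T (A x j i) -> unanimous_one F (A x) j.
Proof.
move=> hearly hi hby; case: (HA) => Hcaus _ _ Hval.
pose x' : hist n := fun j k => pad_after T (x j k).
have hpad : forall k, k \notin F -> exists s, x' j k = Some (s, true).
  move=> k hk; rewrite /x' /pad_after.
  case E: (x j k) => [[s b]|] /=; last by exists T.
  case: ifP => hs; last by exists T.
  by exists s; rewrite (hearly k s b hk E hs).
have [s' hs'] := Hval x' j true hpad i hi.
have := Hcaus T x x' (fun j k _ => esym (trunc_lt_pad_after T (x j k))) j i hi.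
move: hby; rewrite hs'; case E: (A x j i) => [[s b]|] //= hsT.
rewrite hsT; case: ifP => // _ [_ hb]; subst b.
exact: unanimous_one_of_output E.
Qed.

End ABBAFamily.

Section ProtocolRun.

Context {n t : nat} {F : {set 'I_n}} {M : Type} {Sigma : eqType}.
Context {Enc : M -> 'I_n -> Sigma} {winp : 'I_n -> M} {w : M}.
Context {D : 'I_n -> 'I_n -> option (nat * Sigma)} {out inp : hist n}.
Context (Hsame : forall i, i \notin F -> winp i = w).
Context (HD : RBC_family F (fun j => Enc (winp j) j) D).
Context (Hrun : protocol_run t F Enc winp D out inp).

Lemma honest_input_defined j i :
  j \notin F -> i \notin F -> inp j i <> None.
Proof.
move=> hj hi E; have := Hrun j i hi; rewrite E => -[hD _].
case: HD => _ Hval _; have [s] := Hval j hj i hi.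
by rewrite hD.
Qed.

Lemma honest_input_one j i s b :
  j \notin F -> i \notin F -> inp j i = Some (s, b) ->
  ~~ triggered t out i s -> b.
Proof.
move=> hj hi E hnot; have := Hrun j i hi; rewrite E.
case=> [[y [hD -> _]] | [_ htrig _ _]]; last by rewrite htrig in hnot.
case: HD => _ Hval _; have [s'] := Hval j hj i hi.
rewrite hD => -[_ ->].
by rewrite (Hsame j hj) (Hsame i hi) eqxx.
Qed.

End ProtocolRun.

Theorem lemma4 (n t : nat) (Hnt : 3 * t + 1 <= n)
  (F : {set 'I_n}) (HF : #|F| <= t)
  (M : Type) (Sigma : eqType)
  (Enc : M -> 'I_n -> Sigma) (Dec : ('I_n -> option Sigma) -> M)
  (Hcode : erasure_code t Enc Dec)
  (winp : 'I_n -> M) (w : M) (Hsame : forall i, i \notin F -> winp i = w)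
  (D : 'I_n -> 'I_n -> option (nat * Sigma))
  (HD : RBC_family F (fun j => Enc (winp j) j) D)
  (A : hist n -> hist n) (HA : ABBA_family F A)
  (inp : hist n) (Hrun : protocol_run t F Enc winp D (A inp) inp) :
  t.+1 <= #|[set j : 'I_n | [forall i : 'I_n, (i \notin F) ==> outputs_one (A inp j i)]]|.
Proof.
have input_one := honest_input_one Hsame HD Hrun.
pose fired T := [exists i, (i \notin F) && triggered t (A inp) i T].
have [[T fT] | never] := classic (exists T, fired T).
- have [T0 /existsP[i0 /andP[hi0 trig0]] minT0] := ex_minnP (ex_intro _ T fT).
  set S := [set j | out_by T0 (A inp j i0)].
  apply: (leq_trans (honest_leaders_card S Hnt HF trig0)).
  apply/subset_leq_card/subsetP => j; rewrite !inE => /andP[hj hby].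
  apply: (unanimous_one_of_early_output HA _ hi0 hby) => k s b hk E hs.
  apply: (input_one j k s b hj hk E); apply: contraTN hs => trig.
  by rewrite -leqNgt minT0 //; apply/existsP; exists k; rewrite hk.
- have: n - t <= #|[set: 'I_n]| by rewrite cardsT card_ord leq_subr.
  move/(honest_leaders_card _ Hnt HF)/leq_trans; apply.
  apply/subset_leq_card/subsetP => j; rewrite !inE => /andP[hj _].
  apply: (unanimous_one_of_inputs HA) => i hi.
  case E: (inp j i) => [[s b]|]; last by have := honest_input_defined HD Hrun j i hj hi E.
  exists s; rewrite (input_one j i s b hj hi E) //.
  by apply/negP => trig; apply: never; exists s; apply/existsP; exists i; rewrite hi.
Qed.
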